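(* Let $p$ be a prime. For an integer $r$ with $|r|<2\sqrt p$ define \[ c_{r,p}=\begin{cases} 1/2, &\text{if } r^2-4p=-4\alpha^2 \text{ for some }\alpha\in\mathbb{Z},\\ 2/3, &\text{if } r^2-4p=-3\alpha^2 \text{ for some }\alpha\in\mathbb{Z},\\ 0, &\text{otherwise}. \end{cases} \] Then \[ \sum_{\substack{r\in\mathbb{Z},\ |r|<2\sqrt p,\\ r\equiv 0\pmod 2}}c_{r,p} =\begin{cases} 10/3, & p\equiv 1\pmod{12},\\ 2, & p\equiv 5\pmod{12},\\ 4/3, & p\equiv 7\pmod{12},\\ 0, & p\equiv 11\pmod{12}. \end{cases} \]
   Context: The sum runs over all even integers $r$ (positive, negative and zero) with $|r|<2\sqrt p$. *)

From mathcomp Require Import all_boot all_order all_algebra.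
From Stdlib Require Import ClassicalEpsilon.
Set Implicit Arguments. Unset Strict Implicit. Unset Printing Implicit Defensive.
Import Order.TTheory GRing.Theory Num.Theory.
Local Open Scope ring_scope.

Definition c_rp (r : int) (p : nat) : rat :=
  if excluded_middle_informative
       (exists a : int, r ^+ 2 - 4 * p%:Z = - 4 * a ^+ 2)
  then 1 / 2
  else if excluded_middle_informative
       (exists a : int, r ^+ 2 - 4 * p%:Z = - 3 * a ^+ 2)
  then 2 / 3
  else 0.

(* The integers -2p, ..., 2p (each once); every integer r with
   |r| < 2 sqrt p lies in this range. *)
Definition int_window (p : nat) : seq int :=
  [seq (i%:Z - (2 * p)%:Z) | i <- iota 0 (4 * p).+1].

(* |r| < 2 sqrt p  <=>  r^2 < 4p  for integers r. *)
Definition in_hasse (r : int) (p : nat) : bool := r ^+ 2 < 4 * p%:Z.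

Definition sum_even_c (p : nat) : rat :=
  \sum_(r <- int_window p | in_hasse r p && (2 %| r)%Z) c_rp r p.

(* For even r = 2s with r^2 < 4p, c_{r,p} = 1/2 exactly when p = s^2 + t^2 with
   t > 0, and c_{r,p} = 2/3 exactly when p = s^2 + 3t^2 with t > 0 (the two cases
   exclude each other because 4a^2 = 3b^2 forces a = 0).  A prime p is of the
   form a^2 + b^2 iff p = 1 mod 4, and of the form x^2 + 3y^2 iff p = 1 mod 3:
   primitive roots of unity in F_p give square roots of -1 and -3 modulo p, and
   Thue's lemma turns them into a small multiple of p of the required form.  The
   representations are unique up to order and signs, so the even r that count are
   the four values +-2a, +-2b and the two values +-2x, and the sum equals
   4 * 1/2 * [p = 1 mod 4] + 2 * 2/3 * [p = 1 mod 3]. *)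

From mathcomp Require Import all_boot all_order all_algebra cyclic finfield.
From mathcomp Require Import zify ring lra.
From Stdlib Require Import ClassicalEpsilon.
Set Implicit Arguments. Unset Strict Implicit. Unset Printing Implicit Defensive.
Import Order.TTheory GRing.Theory Num.Theory.
Local Open Scope ring_scope.

Lemma finField_prim_root_exists (F : finFieldType) (n : nat) :
  (0 < n)%N -> (n %| #|F|.-1)%N -> exists z : F, n.-primitive_root z.
Proof.
move=> n_gt0 n_dvd; set rs := enum [pred x : F | x != 0].
have size_rs : size rs = #|F|.-1 by rewrite -cardE cardC1.
have F1_gt0 : (0 < #|F|.-1)%N by rewrite -subn1 subn_gt0 card_finNzRing_gt1.
have : has #|F|.-1.-primitive_root rs.
  apply: has_prim_root; rewrite ?enum_uniq ?size_rs //.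
  apply/allP => x; rewrite mem_enum inE => x_neq0; rewrite unity_rootE.
  apply/eqP/(mulIf x_neq0); rewrite mul1r -exprSr prednK ?expf_card //.
  by rewrite (cardD1 x) inE.
by case/hasP => z _ /dvdn_prim_root/(_ n n_dvd); exists (z ^+ (#|F|.-1 %/ n)).
Qed.

Lemma prim4_root_sqr (R : idomainType) (z : R) : 4.-primitive_root z -> z ^+ 2 = -1.
Proof.
move=> prim_z; have := prim_expr_order prim_z; rewrite (exprM z 2 2) => /eqP.
by rewrite sqrf_eq1 -(prim_order_dvd prim_z) orFb => /eqP.
Qed.

Lemma prim3_root_sqr (R : idomainType) (z : R) :
  3.-primitive_root z -> (2 * z + 1) ^+ 2 = - 3%:R.
Proof.
move=> prim_z; have z3 := prim_expr_order prim_z.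
have : (z - 1) * (z ^+ 2 + z + 1) = 0.
  by rewrite -[RHS](subrr 1) -[X in _ = X - _]z3; ring.
move/eqP; rewrite mulf_eq0 subr_eq0 -(expr1 z) -(prim_order_dvd prim_z) orFb.
move=> /eqP z_eq.
rewrite -[RHS]sub0r -(mulr0 4%:R) -z_eq; ring.
Qed.

Lemma Fp_sqr_eq_dvdn (p d : nat) (x : 'F_p) :
  prime p -> x ^+ 2 = - d%:R -> (p %| x ^ 2 + d)%N.
Proof.
move=> pr x2; rewrite (dvdn_pcharf (pchar_Fp pr)) natrD natrX natr_Zp x2.
by rewrite addNr.
Qed.

Lemma sqrt_neg1_mod (p : nat) : prime p -> (p %% 4 = 1)%N ->
  exists m : nat, (p %| m ^ 2 + 1)%N.
Proof.
move=> pr p_mod4; have [|z prim_z] := @finField_prim_root_exists 'F_p 4 isT.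
  by rewrite card_Fp //; apply/dvdnP; exists (p %/ 4)%N; lia.
by exists z; apply: Fp_sqr_eq_dvdn; rewrite // (prim4_root_sqr prim_z).
Qed.

Lemma sqrt_neg3_mod (p : nat) : prime p -> (p %% 3 = 1)%N ->
  exists m : nat, (p %| m ^ 2 + 3)%N.
Proof.
move=> pr p_mod3; have [|z prim_z] := @finField_prim_root_exists 'F_p 3 isT.
  by rewrite card_Fp //; apply/dvdnP; exists (p %/ 3)%N; lia.
by exists (2 * z + 1); apply: Fp_sqr_eq_dvdn; rewrite // (prim3_root_sqr prim_z).
Qed.

Lemma PoszX (n k : nat) : (n ^ k)%N%:Z = n%:Z ^+ k.
Proof. by rewrite -!natz natrX. Qed.

Lemma abszX2 (x : int) : (`|x| ^ 2)%N%:Z = x ^+ 2.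
Proof. by rewrite -abszX gez0_abs ?sqr_ge0. Qed.

Lemma exists_isqrt (n : nat) : exists k : nat, (k ^ 2 <= n < k.+1 ^ 2)%N.
Proof.
elim: n => [|n [k hk]]; first by exists 0%N.
by case: (ltnP n.+1 (k.+1 ^ 2)) => h; [exists k | exists k.+1]; lia.
Qed.

Lemma sqr_neq_prime (p k : nat) : prime p -> (k ^ 2 != p)%N.
Proof.
move=> pr; apply/eqP => sq_k; have p_gt1 := prime_gt1 pr.
have : (p %| k ^ 2)%N by rewrite sq_k.
rewrite Euclid_dvdX // andbT => /dvdn_leq; nia.
Qed.

Lemma thue (p m : nat) : prime p -> exists u v : int,
  [/\ (u, v) != (0, 0), u ^+ 2 < p%:Z, v ^+ 2 < p%:Z & (p%:Z %| u + m%:Z * v)%Z].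
Proof.
move=> pr; have p_gt0 := prime_gt0 pr.
have [k /andP[k_le k_gt]] := exists_isqrt p.
have k_lt : (k ^ 2 < p)%N by rewrite ltn_neqAle sqr_neq_prime.
pose f (ij : 'I_k.+1 * 'I_k.+1) := Ordinal (ltn_pmod (ij.1 + m * ij.2) p_gt0).
have /injectivePn [[a1 a2] [[b1 b2] neq_ab /(congr1 val) /= f_ab]] : ~~ injectiveb f.
  by apply/injectiveP => /leq_card; rewrite card_prod !card_ord; lia.
exists (a1%:Z - b1%:Z), (a2%:Z - b2%:Z).
move: (ltn_ord a1) (ltn_ord a2) (ltn_ord b1) (ltn_ord b2) => a1k a2k b1k b2k.
split; [|nia|nia|].
- apply: contraNneq neq_ab => -[/eqP + /eqP]; rewrite !subr_eq0 => /eqP e1 /eqP e2.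
  by rewrite xpair_eqE -!val_eqE /= -!eqz_nat e1 e2 !eqxx.
- have : ((a1 + m * a2)%N%:Z == (b1 + m * b2)%N%:Z %[mod p%:Z])%Z.
    by rewrite !modz_nat f_ab.
  by rewrite eqz_mod_dvd !PoszD !PoszM; congr (_ %| _)%Z; ring.
Qed.

Lemma form_small_multiple (p d m : nat) : prime p -> (0 < d)%N ->
  (p %| m ^ 2 + d)%N ->
  exists u v k : nat, (0 < k <= d)%N /\ (u ^ 2 + d * v ^ 2 = k * p)%N.
Proof.
move=> pr d_gt0 /dvdnP[s m_form].
have [u [v [uv_neq0 u_lt v_lt /dvdzP[t uv_t]]]] := thue m pr.
have form_uv : u ^+ 2 + d%:Z * v ^+ 2
    = p%:Z * (p%:Z * t ^+ 2 - 2 * t * m%:Z * v + s%:Z * v ^+ 2).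
  have -> : u = t * p%:Z - m%:Z * v by rewrite -uv_t; ring.
  have -> : d%:Z = s%:Z * p%:Z - m%:Z ^+ 2 by rewrite -PoszM -m_form PoszD; ring.
  ring.
have n_eq : (`|u| ^ 2 + d * `|v| ^ 2)%N%:Z = u ^+ 2 + d%:Z * v ^+ 2.
  by rewrite PoszD PoszM !abszX2.
have : (p%:Z %| (`|u| ^ 2 + d * `|v| ^ 2)%N%:Z)%Z.
  by rewrite n_eq form_uv dvdz_mulr.
rewrite dvdzE !absz_nat => /dvdnP[k form_k].
exists `|u|%N, `|v|%N, k; split => //.
have sqr_lt (w : int) : w ^+ 2 < p%:Z -> (`|w| ^ 2 < p)%N.
  by rewrite -ltz_nat abszX2.
have := sqr_lt _ u_lt; have := sqr_lt _ v_lt.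
have : (`|u| != 0)%N || (`|v| != 0)%N.
  by move: uv_neq0; rewrite xpair_eqE negb_and !absz_eq0.
move: form_k; clear -d_gt0; nia.
Qed.

Lemma sqrn_mod4 (n : nat) : (n ^ 2 %% 4 <= 1)%N.
Proof. by rewrite -modnXm; case: (n %% 4)%N (ltn_pmod n (isT : 0 < 4)%N) => [|[|[|[|]]]]. Qed.

Lemma sqrn_mod3 (n : nat) : (n ^ 2 %% 3 <= 1)%N.
Proof. by rewrite -modnXm; case: (n %% 3)%N (ltn_pmod n (isT : 0 < 3)%N) => [|[|[|]]]. Qed.

Lemma prime_sum_two_sq (p : nat) : prime p -> (p %% 4 = 1)%N ->
  exists a b : nat, (a ^ 2 + b ^ 2 = p)%N.
Proof.
move=> pr p_mod4; have [m sqrt_m] := sqrt_neg1_mod pr p_mod4.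
have [a [b [k [k_bound form_ab]]]] := @form_small_multiple p 1 m pr isT sqrt_m.
have k1 : k = 1%N by lia.
by exists a, b; move: form_ab; rewrite k1 !mul1n.
Qed.

Lemma prime_sum_sq_three_sq (p : nat) : prime p -> (p %% 3 = 1)%N ->
  exists x y : nat, (x ^ 2 + 3 * y ^ 2 = p)%N.
Proof.
move=> pr p_mod3; have [m sqrt_m] := sqrt_neg3_mod pr p_mod3.
have [u [v [k [/andP[k_gt0 k_le3] form_uv]]]] :=
  @form_small_multiple p 3 m pr isT sqrt_m.
have p_mod2 : (p %% 2 = 1)%N by rewrite modn2; case: (even_prime pr) p_mod3 => [->|->].
have [k1 | [k2 | k3]] : (k = 1 \/ k = 2 \/ k = 3)%N by lia.
- by exists u, v; rewrite form_uv k1 mul1n.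
- (* u^2 + 3v^2 is never 2 modulo 4, unlike 2p. *)
  have := sqrn_mod4 u; have := sqrn_mod4 v.
  by move: form_uv; rewrite k2; move: (u ^ 2)%N (v ^ 2)%N => U V; lia.
- have /dvdnP[w u_eq] : (3 %| u)%N.
    have : (3 %| u ^ 2)%N.
      by apply/dvdnP; exists (p - v ^ 2)%N; move: form_uv; rewrite k3; lia.
    by rewrite Euclid_dvdX // andbT.
  by exists v, w; move: form_uv; rewrite k3 u_eq; lia.
Qed.

Lemma sum_form_gt0 (p d a b : nat) : prime p -> d != p ->
  (a ^ 2 + d * b ^ 2 = p)%N -> (0 < a)%N /\ (0 < b)%N.
Proof.
move=> pr d_neq_p form_ab; split; rewrite lt0n; apply/eqP => ab0.
  have : (b ^ 2 %| p)%N by rewrite -form_ab ab0 dvdn_mull.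
  case/primeP: (pr) => _ /[apply] /orP[/eqP sq_b | /eqP sq_b].
    by move: d_neq_p form_ab; rewrite ab0 sq_b; lia.
  by have := sqr_neq_prime b pr; rewrite sq_b eqxx.
by have := sqr_neq_prime a pr; rewrite -form_ab ab0 muln0 addn0 eqxx.
Qed.

Lemma mul_sqr_add_eq_sqr (k x y p : int) : 1 <= k -> 0 < p -> p <= x -> 0 <= y ->
  k * x ^+ 2 + y = p ^+ 2 -> [/\ k = 1, x = p & y = 0].
Proof.
move=> k_ge1 p_gt0 p_le_x y_ge0 sum_eq.
have : p ^+ 2 <= x ^+ 2 by rewrite ler_pXn2r // ?nnegrE; lia.
have : x ^+ 2 <= k * x ^+ 2 by rewrite ler_peMl ?sqr_ge0.
by split; nia.
Qed.

Lemma sum_form_cross_eq (p d a b c e : nat) : (0 < p)%N -> (0 < d)%N ->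
  (a ^ 2 + d * b ^ 2 = p)%N -> (c ^ 2 + d * e ^ 2 = p)%N -> (a * e = b * c)%N ->
  a = c /\ b = e.
Proof.
move=> p_gt0 d_gt0 form_ab form_ce ae_bc.
have sqr_inj (x y : nat) : (x ^ 2 = y ^ 2)%N -> x = y.
  by move/eqP; rewrite eqn_exp2r // => /eqP.
have a_eq_c : a = c.
  apply/sqr_inj/eqP; rewrite -(eqn_pmul2r p_gt0) -{1}form_ce -form_ab.
  apply/eqP; rewrite (_ : _ * _ = a ^ 2 * c ^ 2 + d * (a * e) ^ 2)%N; last by ring.
  by rewrite ae_bc; ring.
split=> //; apply/sqr_inj/eqP; rewrite -(eqn_pmul2l d_gt0); apply/eqP.
by rewrite -a_eq_c in form_ce; lia.
Qed.

(* p divides (ac + dbe)(ae + bc) = p(ce + ab), and Brahmagupta's identities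
   (ac + dbe)^2 + d(ae - bc)^2 = p^2 = d(ae + bc)^2 + (ac - dbe)^2
   force the factor divisible by p to equal p. *)
Lemma sum_form_uniq (p d a b c e : nat) : prime p -> (0 < d)%N ->
  (0 < a)%N -> (0 < c)%N -> (0 < e)%N ->
  (a ^ 2 + d * b ^ 2 = p)%N -> (c ^ 2 + d * e ^ 2 = p)%N ->
  (a = c /\ b = e) \/ [/\ d = 1, a = e & b = c]%N.
Proof.
move=> pr d_gt0 a_gt0 c_gt0 e_gt0 form_ab form_ce.
have p_gt0 := prime_gt0 pr.
have p_gt0Z : 0 < p%:Z by rewrite ltz_nat.
have formZ (x y : nat) : (x ^ 2 + d * y ^ 2 = p)%N -> x%:Z ^+ 2 + d%:Z * y%:Z ^+ 2 = p%:Z.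
  by move=> <-; rewrite PoszD PoszM !PoszX.
have [form_abZ form_ceZ] := (formZ _ _ form_ab, formZ _ _ form_ce).
set X := (a * c + d * b * e)%N; set Y := (a * e + b * c)%N.
have XY : (X * Y = p * (c * e + a * b))%N.
  by rewrite mulnDr -{1}form_ab -form_ce /X /Y; ring.
have : (p %| X * Y)%N by rewrite XY dvdn_mulr.
rewrite Euclid_dvdM // => /orP[X_dvd | Y_dvd]; [left | right].
- have X_ge : (p <= X)%N by rewrite dvdn_leq ?addn_gt0 ?muln_gt0 ?a_gt0 ?c_gt0.
  have brahmagupta : 1 * X%:Z ^+ 2 + d%:Z * (a%:Z * e%:Z - b%:Z * c%:Z) ^+ 2 = p%:Z ^+ 2.
    by rewrite /X PoszD !PoszM [RHS]expr2 -{1}form_abZ -form_ceZ; ring.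
  have [_ _ /eqP] := mul_sqr_add_eq_sqr (lexx 1) p_gt0Z (X_ge : p%:Z <= X%:Z)
    (mulr_ge0 (isT : 0 <= d%:Z) (sqr_ge0 _)) brahmagupta.
  rewrite mulf_eq0 sqrf_eq0 subr_eq0 -!PoszM !eqz_nat eqn0Ngt d_gt0 => /eqP.
  exact: sum_form_cross_eq p_gt0 d_gt0 form_ab form_ce.
- have Y_ge : (p <= Y)%N by rewrite dvdn_leq ?addn_gt0 ?muln_gt0 ?a_gt0 ?e_gt0.
  have brahmagupta : d%:Z * Y%:Z ^+ 2 + (a%:Z * c%:Z - d%:Z * b%:Z * e%:Z) ^+ 2 = p%:Z ^+ 2.
    by rewrite /Y PoszD !PoszM [RHS]expr2 -{1}form_abZ -form_ceZ; ring.
  have [d1 _ /eqP] := mul_sqr_add_eq_sqr (d_gt0 : 1 <= d%:Z) p_gt0Z (Y_ge : p%:Z <= Y%:Z)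
    (sqr_ge0 _) brahmagupta.
  case: d1 => d1; rewrite sqrf_eq0 subr_eq0 d1 mul1r -!PoszM eqz_nat => /eqP ac_be.
  subst d; have form_ec : (e ^ 2 + 1 * c ^ 2 = p)%N by rewrite -form_ce !mul1n addnC.
  by have [-> ->] := sum_form_cross_eq p_gt0 d_gt0 form_ab form_ec ac_be.
Qed.

Definition disc_neg4_sqr (r : int) (p : nat) : Prop :=
  exists a : int, r ^+ 2 - 4 * p%:Z = - 4 * a ^+ 2.

Definition disc_neg3_sqr (r : int) (p : nat) : Prop :=
  exists a : int, r ^+ 2 - 4 * p%:Z = - 3 * a ^+ 2.

Definition even_hasse (p : nat) (r : int) : bool := in_hasse r p && (2 %| r)%Z.

Lemma four_sqr_eq_three_sqr (a b : nat) : (4 * a ^ 2 = 3 * b ^ 2)%N -> a = 0%N.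
Proof.
move=> eq_ab; apply/eqP/negPn/negP => a_neq0.
have b_neq0 : b != 0%N by apply: contraNneq a_neq0 => b0; move: eq_ab; rewrite b0; lia.
move: eq_ab => /(congr1 (logn 3)).
rewrite !lognM ?expn_gt0 ?lt0n ?a_neq0 ?b_neq0 //.
by rewrite (_ : logn 3 4 = 0%N) // (_ : logn 3 3 = 1%N) //; lia.
Qed.

Lemma disc_neg4_neg3_hasse (r : int) (p : nat) :
  in_hasse r p -> disc_neg4_sqr r p -> disc_neg3_sqr r p -> False.
Proof.
rewrite /in_hasse => hasse [a disc_a] [b disc_b].
have /four_sqr_eq_three_sqr a0 : (4 * `|a| ^ 2 = 3 * `|b| ^ 2)%N by nia.
by move: disc_a hasse; rewrite (_ : a = 0) //; lia.
Qed.

Lemma c_rp_eq (r : int) (p : nat) (b4 b3 : bool) : in_hasse r p ->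
  (disc_neg4_sqr r p <-> b4) -> (disc_neg3_sqr r p <-> b3) ->
  c_rp r p = b4%:R / 2 + b3%:R * (2 / 3).
Proof.
move=> hasse iff4 iff3; rewrite /c_rp.
case: excluded_middle_informative => [disc4|ndisc4].
  have b3F : b3 = false by apply/negP => /iff3; exact: disc_neg4_neg3_hasse.
  by rewrite b3F (iffLR iff4 disc4) /=; ring.
have b4F : b4 = false by apply/negP => /iff4.
case: excluded_middle_informative => [disc3 | ndisc3].
  by rewrite b4F (iffLR iff3 disc3) /=; ring.
have b3F : b3 = false by apply/negP => /iff3.
by rewrite b4F b3F /=; ring.
Qed.

Lemma sum_mem_filter (T : eqType) (w A : seq T) (q : pred T) : uniq w -> uniq A ->
  {subset A <= [predI q & mem w]} -> (\sum_(x <- w | q x) (x \in A) = size A)%N.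
Proof.
move=> uniq_w uniq_A A_sub.
rewrite -big_filter (eq_bigr (fun x => if x \in A then 1 else 0)%N); last first.
  by move=> x _; case: (x \in A).
rewrite -big_mkcond sum1_count -size_filter; apply/perm_size/uniq_perm.
- by rewrite filter_uniq ?filter_uniq.
- exact: uniq_A.
by move=> x; rewrite !mem_filter; apply/andb_idr => /A_sub; rewrite inE.
Qed.

Lemma mem_int_window (r : int) (p : nat) : in_hasse r p -> r \in int_window p.
Proof.
rewrite /in_hasse => hasse; apply/mapP; exists `|(r + (2 * p)%N%:Z)%R|%N; last by nia.
by rewrite mem_iota; nia.
Qed.

Lemma int_window_uniq (p : nat) : uniq (int_window p).
Proof. by rewrite map_inj_uniq ?iota_uniq // => i j /addIr []. Qed.

Lemma sum_even_c_eq (p : nat) (A4 A3 : seq int) : uniq A4 -> uniq A3 ->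
  (forall r, even_hasse p r /\ disc_neg4_sqr r p <-> r \in A4) ->
  (forall r, even_hasse p r /\ disc_neg3_sqr r p <-> r \in A3) ->
  sum_even_c p = (size A4)%:R / 2 + (size A3)%:R * (2 / 3).
Proof.
move=> uniq_A4 uniq_A3 mem_A4 mem_A3.
have sum_mem A (mem_A : forall r, r \in A -> even_hasse p r) : uniq A ->
    \sum_(r <- int_window p | even_hasse p r) (r \in A)%:R = (size A)%:R :> rat.
  move=> uniq_A; rewrite -natr_sum sum_mem_filter ?int_window_uniq // => r r_A.
  have /andP[hasse _] := mem_A r r_A.
  by apply/andP; split; [exact: mem_A | exact: mem_int_window].
rewrite /sum_even_c (eq_bigr (fun r => (r \in A4)%:R / 2 + (r \in A3)%:R * (2 / 3))).
  rewrite big_split -!mulr_suml /= !sum_mem // => r.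
    by case/mem_A3.
  by case/mem_A4.
move=> r even_r; apply: c_rp_eq; first by case/andP: even_r.
  by split=> [disc | /mem_A4 []//]; apply/mem_A4.
by split=> [disc | /mem_A3 []//]; apply/mem_A3.
Qed.

Lemma even_hasse_disc_neg4P (p : nat) (r : int) :
  even_hasse p r /\ disc_neg4_sqr r p <->
  exists s t : nat,
    [/\ r = 2 * s%:Z \/ r = - (2 * s%:Z), (s ^ 2 + t ^ 2 = p)%N & (0 < t)%N].
Proof.
rewrite /even_hasse /in_hasse; split.
  case=> /andP[hasse /dvdzP[k r_eq]] [a disc_a]; subst r.
  exists `|k|%N, `|a|%N; split.
  - lia.
  - by apply/eqP; rewrite -eqz_nat PoszD !abszX2; apply/eqP; lia.
  rewrite absz_gt0; apply: contraTneq hasse => a0; rewrite a0 in disc_a; lia.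
case=> s [t [r_s form_st t_gt0]]; split; last by exists t%:Z; nia.
apply/andP; split; first by nia.
by apply/dvdzP; exists (if r == 2 * s%:Z then s%:Z else - s%:Z); case: eqP; lia.
Qed.

Lemma even_hasse_disc_neg3P (p : nat) (r : int) :
  even_hasse p r /\ disc_neg3_sqr r p <->
  exists s t : nat,
    [/\ r = 2 * s%:Z \/ r = - (2 * s%:Z), (s ^ 2 + 3 * t ^ 2 = p)%N & (0 < t)%N].
Proof.
rewrite /even_hasse /in_hasse; split.
  case=> /andP[hasse /dvdzP[k r_eq]] [a disc_a]; subst r.
  have form_ka : (4 * `|k| ^ 2 + 3 * `|a| ^ 2 = 4 * p)%N.
    by move: (abszX2 k) (abszX2 a); lia.
  have /dvdnP[t a_eq] : (2 %| `|a|)%N.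
    have : (2 %| 3 * `|a| ^ 2)%N.
      apply/dvdnP; exists (2 * p - 2 * `|k| ^ 2)%N.
      by move: form_ka; move: (_ ^ 2)%N => K; lia.
    by rewrite Euclid_dvdM // Euclid_dvdX // andbT => /orP[].
  exists `|k|%N, t; split.
  - lia.
  - by move: form_ka; rewrite a_eq; lia.
  rewrite lt0n; apply: contraTneq hasse => t0; move: disc_a.
  by rewrite -(abszX2 a) a_eq t0; lia.
case=> s [t [r_s form_st t_gt0]]; split; last by exists (2 * t%:Z); nia.
apply/andP; split; first by nia.
by apply/dvdzP; exists (if r == 2 * s%:Z then s%:Z else - s%:Z); case: eqP; lia.
Qed.

Lemma even_hasse_disc_neg4_seq (p : nat) : prime p -> odd p ->
  exists A : seq int, [/\ uniq A,
    forall r, even_hasse p r /\ disc_neg4_sqr r p <-> r \in A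
    & size A = if p %% 4 == 1 then 4 else 0]%N.
Proof.
move=> pr p_odd; have p_gt1 := prime_gt1 pr.
have form1 (x y : nat) : (x ^ 2 + y ^ 2 = p -> x ^ 2 + 1 * y ^ 2 = p)%N by rewrite mul1n.
case: ifP => [/eqP p_mod4 | /negbT p_mod4].
  have [a [b /form1 form_ab]] := prime_sum_two_sq pr p_mod4.
  have [|a_gt0 b_gt0] := sum_form_gt0 pr _ form_ab; first by rewrite neq_ltn p_gt1.
  have a_neq_b : a != b by apply: contraTneq p_odd => a_eq_b; rewrite -form_ab a_eq_b; lia.
  exists [:: 2 * a%:Z; - (2 * a%:Z); 2 * b%:Z; - (2 * b%:Z)]; split=> //.
    by rewrite /= !inE; lia.
  move=> r; rewrite even_hasse_disc_neg4P !inE; split.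
    case=> s [t [r_s /form1 form_st t_gt0]].
    have [|s_gt0 _] := sum_form_gt0 pr _ form_st; first by rewrite neq_ltn p_gt1.
    have [[a_s _]|[_ _ b_s]] :=
      sum_form_uniq pr (ltn0Sn 0) a_gt0 s_gt0 t_gt0 form_ab form_st; lia.
  move=> r_ab; have [r_a | r_b] : (r = 2 * a%:Z \/ r = - (2 * a%:Z)) \/
      (r = 2 * b%:Z \/ r = - (2 * b%:Z)) by lia.
    by exists a, b; split=> //; rewrite -form_ab mul1n.
  by exists b, a; split=> //; rewrite -form_ab mul1n addnC.
exists [::]; split=> // r; split=> //; rewrite even_hasse_disc_neg4P.
case=> s [t [_ form_st _]].
have : (p %% 2 = 1)%N by rewrite modn2 p_odd.
move: p_mod4 (sqrn_mod4 s) (sqrn_mod4 t); rewrite -form_st.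
by move: (s ^ 2)%N (t ^ 2)%N => S T; lia.
Qed.

Lemma even_hasse_disc_neg3_seq (p : nat) : prime p -> p != 3%N ->
  exists A : seq int, [/\ uniq A,
    forall r, even_hasse p r /\ disc_neg3_sqr r p <-> r \in A
    & size A = if p %% 3 == 1 then 2 else 0]%N.
Proof.
move=> pr p_neq3.
case: ifP => [/eqP p_mod3 | /negbT p_mod3].
  have [x [y form_xy]] := prime_sum_sq_three_sq pr p_mod3.
  have [|x_gt0 y_gt0] := sum_form_gt0 pr _ form_xy; first by rewrite eq_sym.
  exists [:: 2 * x%:Z; - (2 * x%:Z)]; split=> //.
    by rewrite /= !inE; lia.
  move=> r; rewrite even_hasse_disc_neg3P !inE; split.
    case=> s [t [r_s form_st t_gt0]].
    have [|s_gt0 _] := sum_form_gt0 pr _ form_st; first by rewrite eq_sym.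
    have [[x_s _]|[]//] :=
      sum_form_uniq pr (ltn0Sn 2) x_gt0 s_gt0 t_gt0 form_xy form_st; lia.
  by move=> r_x; exists x, y; split=> //; lia.
exists [::]; split=> // r; split=> //; rewrite even_hasse_disc_neg3P.
case=> s [t [_ form_st _]].
have : ~~ (3 %| p)%N by rewrite dvdn_prime2 // eq_sym.
move: p_mod3 (sqrn_mod3 s); rewrite /dvdn -form_st.
by move: (s ^ 2)%N (t ^ 2)%N => S T; lia.
Qed.

Theorem proposition10 (p : nat) (hp : prime p) :
  [/\ (p %% 12 = 1)%N -> sum_even_c p = 10 / 3,
      (p %% 12 = 5)%N -> sum_even_c p = 2,
      (p %% 12 = 7)%N -> sum_even_c p = 4 / 3
    & (p %% 12 = 11)%N -> sum_even_c p = 0].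
Proof.
have sum_eq (k : nat) : (p %% 12 = k)%N -> odd k -> k != 3%N ->
    sum_even_c p = (if k %% 4 == 1 then 4 else 0)%N%:R / 2
                   + (if k %% 3 == 1 then 2 else 0)%N%:R * (2 / 3).
  move=> p_mod12 k_odd k_neq3.
  have p_odd : odd p by rewrite -(@odd_mod p 12) // p_mod12.
  have p_neq3 : p != 3%N by apply: contraNneq k_neq3 => p3; rewrite -p_mod12 p3.
  have [A4 [uniq_A4 mem_A4 size_A4]] := even_hasse_disc_neg4_seq hp p_odd.
  have [A3 [uniq_A3 mem_A3 size_A3]] := even_hasse_disc_neg3_seq hp p_neq3.
  rewrite (sum_even_c_eq uniq_A4 uniq_A3 mem_A4 mem_A3) size_A4 size_A3.
  by rewrite -(modn_dvdm p (isT : 4 %| 12)%N) -(modn_dvdm p (isT : 3 %| 12)%N) p_mod12.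
by split=> /sum_eq -> //=; lra.
Qed.
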